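(* For integers $k\geq1$ and $n_1,\dots,n_{k}\geq0$, \[ \sum_{\substack{t_1,\dots,t_k\ge0 \\ t_1=t_k=0}} \prod_{i=1}^{k-1} q^{t_{i+1}(n_{i+1} - t_i + t_{i+1})} \begin{bmatrix} n_i+t_i\\ n_i\end{bmatrix}_q \begin{bmatrix} n_i+n_{i+1}\\ n_i+t_i-t_{i+1}\end{bmatrix}_q = \begin{bmatrix} n_1+\cdots+n_{k}\\ n_1,\dots,n_{k}\end{bmatrix}_q. \]
   Context: $[m]_q=1+q+\dots+q^{m-1}$, $[m]_q!=[1]_q\cdots[m]_q$; $\begin{bmatrix} m\\ j\end{bmatrix}_q=\frac{[m]_q!}{[j]_q![m-j]_q!}$ for $0\le j\le m$ and $0$ otherwise; $\begin{bmatrix} n_1+\cdots+n_k\\ n_1,\dots,n_k\end{bmatrix}_q=\frac{[n_1+\cdots+n_k]_q!}{[n_1]_q!\cdots[n_k]_q!}$. The sum is over integer tuples; an empty product equals $1$. *)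

From HB Require Import structures.
From mathcomp Require Import all_boot all_order all_algebra.
Set Implicit Arguments. Unset Strict Implicit. Unset Printing Implicit Defensive.
Import Order.TTheory GRing.Theory Num.Theory.
Local Open Scope ring_scope.

Section QDefs.
Variable F : fieldType.

Definition qint (q : F) (m : nat) : F := \sum_(i < m) q ^+ i.

Definition qfact (q : F) (m : nat) : F := \prod_(1 <= j < m.+1) qint q j.

Definition qbinom (q : F) (m j : int) : F :=
  if (0 <= j) && (j <= m) then
    qfact q `|m|%N / (qfact q `|j|%N * qfact q `|m - j|%N)
  else 0.

Definition qmultinom (q : F) (ns : seq nat) : F :=
  qfact q (sumn ns) / \prod_(x <- ns) qfact q x.
End QDefs.

Definition tent (k M : nat) (t : k.-tuple 'I_M) (i : nat) : nat :=
  nth 0%N (map (@nat_of_ord M) t) i.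

From HB Require Import structures.
From mathcomp Require Import all_boot all_order all_algebra.
From mathcomp Require Import zify ring lra.
Set Implicit Arguments. Unset Strict Implicit. Unset Printing Implicit Defensive.
Import Order.TTheory GRing.Theory Num.Theory.
Local Open Scope ring_scope.

(* The left-hand side is a sum over walks t_1,...,t_k (values in [0,M]) from 0
   to 0 of a product of step weights g_i(t_i, t_{i+1}).  Such a sum is a
   transfer-matrix product: writing W_j(y) for the weighted sum of walks of
   length j+1 from 0 ending at y, we have W_0(y) = [y = 0] and
   W_(j+1)(y) = sum_x W_j(x) g_j(x, y)  (lemma [walk_sum]).
   We then show by induction on j the closed form
     W_j(y) = q^(y(n_j+y)) [n_0+...+n_j; n_0,...,n_j]_q [N_j; y]_q / [n_j+y; n_j]_q
   with N_j = n_0+...+n_(j-1) (lemma [block_walk_closed]); the induction step is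
   the q-Vandermonde identity followed by trinomial revision of q-binomials.
   At y = 0 this is the q-multinomial coefficient, which proves the theorem. *)

Lemma sum_nat_truncate (V : nmodType) (G : nat -> V) L X :
  (L <= X)%N -> (forall t, (L <= t < X)%N -> G t = 0) ->
  \sum_(0 <= t < X) G t = \sum_(0 <= t < L) G t.
Proof.
move=> le_LX G0; rewrite (big_cat_nat (leq0n L) le_LX) /= [X in _ + X]big_nat_cond.
by rewrite [X in _ + X]big1 ?addr0 // => t /andP [tLX _]; exact: G0.
Qed.

Section Walks.
Variable R : pzSemiRingType.
Variable M : nat.
(* [f i x y] is the weight of the i-th step of a walk, going from x to y. *)
Variable f : nat -> nat -> nat -> R.

Fixpoint walk_weight (j y : nat) : R :=
  match j with
  | 0 => (y == 0%N)%:R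
  | j.+1 => \sum_(x < M.+1) walk_weight j x * f j x y
  end.

Lemma tent_rcons K (u : K.+1.-tuple 'I_M.+1) (z : 'I_M.+1) i :
  tent [tuple of rcons u z] i =
    if (i < K.+1)%N then tent u i else if i == K.+1 then val z else 0%N.
Proof.
rewrite /tent /= map_rcons nth_rcons size_map size_tuple.
by case: ltnP => // _; case: eqP.
Qed.

Lemma tent_nth K (u : K.+1.-tuple 'I_M.+1) : tent u K = nth ord0 u K.
Proof. by rewrite /tent (nth_map ord0) // size_tuple. Qed.

Lemma walk_sum0 (y : 'I_M.+1) :
  \sum_(t : 1.-tuple 'I_M.+1 | (tent t 0 == 0%N) && (tent t 0 == y)) 1 =
  walk_weight 0 y.
Proof.
have single_bij : bijective (fun z : 'I_M.+1 => [tuple z]).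
  exists (@thead 0 _) => [z|t] //.
  by case/tupleP: t => x u; rewrite tuple0; apply: val_inj.
rewrite (reindex _ (onW_bij _ single_bij)) /= /tent /=.
have [y0|y_neq0] := eqVneq (y : nat) 0%N.
  rewrite (big_pred1 y) // => z /=; rewrite -y0.
  by rewrite andb_idl // => /eqP ->.
rewrite big_pred0 // => z; apply/negbTE/negP => /andP [/eqP z0 /eqP zy].
by move: y_neq0; rewrite -zy z0.
Qed.

Lemma rcons_tuple_bij K :
  bijective (fun p : K.+1.-tuple 'I_M.+1 * 'I_M.+1 => [tuple of rcons p.1 p.2]).
Proof.
exists (fun t : K.+2.-tuple 'I_M.+1 =>
   ([tuple of belast (thead t) (behead t)], last (thead t) (behead t))).
  case=> u z; case/tupleP: u => x u /=.
  rewrite (_ : thead _ = x); last by rewrite /thead (tnth_nth x).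
  by congr pair; [apply: val_inj; rewrite /= belast_rcons | rewrite last_rcons].
by case/tupleP=> x u; apply: val_inj; rewrite /= -lastI.
Qed.

Lemma walk_sum K (y : 'I_M.+1) :
  \sum_(t : K.+1.-tuple 'I_M.+1 | (tent t 0 == 0%N) && (tent t K == y))
     \prod_(0 <= i < K) f i (tent t i) (tent t i.+1) = walk_weight K y.
Proof.
elim: K y => [|K IH] y.
  by rewrite -walk_sum0; apply: eq_bigr => t _; rewrite big_geq.
rewrite (reindex _ (onW_bij _ (rcons_tuple_bij K))) /=.
transitivity (\sum_(u : K.+1.-tuple 'I_M.+1 | tent u 0 == 0%N) \sum_(z | z == y)
   \prod_(0 <= i < K.+1) f i (tent [tuple of rcons u z] i) (tent [tuple of rcons u z] i.+1)).
  by rewrite pair_big; apply: eq_bigl => -[u z]; rewrite /= !tent_rcons /= ltnn eqxx.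
transitivity (\sum_(u : K.+1.-tuple 'I_M.+1 | tent u 0 == 0%N)
   ((\prod_(0 <= i < K) f i (tent u i) (tent u i.+1)) * f K (tent u K) y)).
  apply: eq_bigr => u _; rewrite (big_pred1 y) // big_nat_recr //=.
  rewrite !tent_rcons ltnSn ltnn eqxx; congr (_ * _).
  apply: eq_big_nat => i /andP [_ lt_iK].
  by rewrite !tent_rcons ltnS ltnW // ltnS lt_iK.
(* Group the shorter walks by their endpoint x and use the induction hypothesis. *)
rewrite (partition_big (fun u : K.+1.-tuple 'I_M.+1 => nth ord0 u K) xpredT) //=.
apply: eq_bigr => x _; rewrite -IH mulr_suml.
apply: eq_big => u; first by rewrite tent_nth.
by move=> /andP [_ /eqP ux]; rewrite tent_nth ux.
Qed.

End Walks.

Section QBinomial.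
Variable F : fieldType.
Variable q : F.
Hypothesis qint_neq0 : forall m : nat, (0 < m)%N -> qint q m != 0.

Lemma qintD a b : qint q (a + b) = qint q a + q ^+ a * qint q b.
Proof.
rewrite /qint big_split_ord /= mulr_sumr; congr (_ + _).
by apply: eq_bigr => i _; rewrite exprD.
Qed.

Lemma qfact0 : qfact q 0 = 1.
Proof. by rewrite /qfact big_geq. Qed.

Lemma qfactS m : qfact q m.+1 = qfact q m * qint q m.+1.
Proof. by rewrite /qfact big_nat_recr. Qed.

Lemma qfact_neq0 m : qfact q m != 0.
Proof.
elim: m => [|m IH]; first by rewrite qfact0 oner_neq0.
by rewrite qfactS mulf_neq0 // qint_neq0.
Qed.

Definition qbin (m j : nat) : F :=
  if (j <= m)%N then qfact q m / (qfact q j * qfact q (m - j)) else 0.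

Lemma qbin_n0 m : qbin m 0 = 1.
Proof. by rewrite /qbin /= subn0 qfact0 mul1r divff // qfact_neq0. Qed.

Lemma qbin_nn m : qbin m m = 1.
Proof. by rewrite /qbin leqnn subnn qfact0 mulr1 divff // qfact_neq0. Qed.

Lemma qbin_gt m j : (m < j)%N -> qbin m j = 0.
Proof. by rewrite /qbin ltnNge => /negbTE ->. Qed.

Lemma qbin_neq0 m j : (j <= m)%N -> qbin m j != 0.
Proof.
by move=> le_jm; rewrite /qbin le_jm mulf_neq0 ?invr_eq0 ?mulf_neq0 ?qfact_neq0.
Qed.

Lemma qbin_sym m j : (j <= m)%N -> qbin m j = qbin m (m - j).
Proof. by move=> le_jm; rewrite /qbin le_jm leq_subr subKn // [_ * qfact q _]mulrC. Qed.

Lemma qbin_pascal m j : qbin m.+1 j.+1 = qbin m j.+1 + q ^+ (m - j) * qbin m j.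
Proof.
case: (ltngtP j m) => [lt_jm|lt_mj|->]; last first.
- by rewrite !qbin_nn qbin_gt // subnn expr0 mul1r add0r.
- by rewrite !qbin_gt ?mulr0 ?addr0 // ltnW.
have [a ->] : exists a, m = (j + a.+1)%N by exists (m - j.+1)%N; lia.
rewrite /qbin !ifT; try lia.
rewrite (_ : (j + a.+1 - j.+1 = a)%N); last by lia.
rewrite (_ : (j + a.+1 - j = a.+1)%N); last by lia.
rewrite (_ : ((j + a.+1).+1 - j.+1 = a.+1)%N); last by lia.
rewrite (qfactS (j + a.+1)) (qfactS j) (qfactS a).
rewrite (_ : ((j + a.+1).+1 = a.+1 + j.+1)%N); last by lia.
rewrite qintD addnC exprS.
field.
by rewrite !qfact_neq0 !qint_neq0.
Qed.

Lemma qbin_trinomial m c s :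
  (c <= m)%N -> qbin m (c + s) * qbin (c + s) c = qbin m c * qbin (m - c) s.
Proof.
move=> le_cm; case: (leqP (c + s) m) => le_csm; last first.
  by rewrite qbin_gt // (@qbin_gt (m - c)) ?mul0r ?mulr0 //; lia.
rewrite /qbin le_csm le_cm leq_addr addKn ifT; last by lia.
rewrite (_ : (m - c - s = m - (c + s))%N); last by lia.
field.
by rewrite !qfact_neq0.
Qed.

Lemma q_vandermonde A B m :
  \sum_(0 <= t < m.+1) q ^+ (t * (B - (m - t))) * qbin A t * qbin B (m - t) =
  qbin (A + B) m.
Proof.
elim: A m => [|A IH] m.
  rewrite big_nat_recl // big1_seq ?addr0 /=.
    by rewrite mul0n expr0 mul1r qbin_n0 subn0 mul1r add0n.
  by move=> i _; rewrite qbin_gt ?mulr0 ?mul0r.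
case: m => [|m]; first by rewrite big_nat1 expr0 mul1r !qbin_n0 mulr1.
rewrite addSn qbin_pascal -!IH.
rewrite big_nat_recl // [X in _ = X + _]big_nat_recl //.
rewrite /= !mul0n !expr0 !mul1r !qbin_n0 !mul1r -addrA; congr (_ + _).
rewrite mulr_sumr -big_split /=; apply: eq_big_nat => i /andP [_ lt_im].
rewrite subSS qbin_pascal mulrDr mulrDl; congr (_ + _).
case: (leqP i A) => le_iA; last by rewrite (qbin_gt le_iA) !(mulr0, mul0r).
case: (leqP (m - i) B) => le_B; last by rewrite (qbin_gt le_B) !mulr0.
rewrite mulrA -exprD !mulrA -exprD; congr (_ ^+ _ * _ * _).
have [x def_x] : exists x, (B - (m - i) = x)%N by eexists.
rewrite def_x (_ : (A + B - m = (A - i) + x)%N); last by lia.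
by rewrite mulSn; lia.
Qed.

Lemma qbinom_nat m j : (j <= m)%N -> qbinom q m%:Z j%:Z = qbin m j.
Proof.
by move=> le_jm; rewrite /qbinom /qbin le_jm ifT ?subzn.
Qed.

(* Weight of the step t -> s of the walk between the blocks b = n_i and
   c = n_(i+1): q^(s(c-t+s)) [b+t; b]_q [b+c; b+t-s]_q, vanishing outside the
   range where both q-binomials are nonzero. *)
Definition step_weight (b c t s : nat) : F :=
  if (s <= b + t)%N && (t <= c + s)%N then
    q ^+ (s * (c + s - t)) * qbin (b + t) b * qbin (b + c) (b + t - s)
  else 0.

Lemma summand_step_weight b c t s :
  q ^ (s%:Z * (c%:Z - t%:Z + s%:Z)) * qbinom q (b + t)%N%:Z b%:Z
    * qbinom q (b + c)%N%:Z ((b + t)%N%:Z - s%:Z) = step_weight b c t s.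
Proof.
rewrite /step_weight qbinom_nat ?leq_addr //.
case: ifP => [/andP [le_s le_t] | out_of_range].
  rewrite (subzn le_s) qbinom_nat; last by lia.
  by rewrite (_ : c%:Z - t%:Z + s%:Z = (c + s - t)%N%:Z) -?PoszM //; lia.
rewrite /qbinom ifF ?mulr0 //.
by apply/negP => /andP [ge0 le_bc]; move/negbT: out_of_range; rewrite negb_and; lia.
Qed.

Definition vandermonde_term (A B m x : nat) : F :=
  if (x <= m)%N then q ^+ (x * (B - (m - x))) * qbin A x * qbin B (m - x) else 0.

Lemma q_vandermonde_range A B m X :
  (A <= X)%N -> \sum_(x < X.+1) vandermonde_term A B m x = qbin (A + B) m.
Proof.
move=> le_AX; rewrite -(big_mkord xpredT) -q_vandermonde.
(* Both sums only have nonzero terms for t <= min A m. *)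
pose L := (minn A m).+1.
have out_A t : (L <= t)%N -> (t <= m)%N -> qbin A t = 0.
  by move=> Lt tm; apply: qbin_gt; rewrite /L in Lt; lia.
rewrite (@sum_nat_truncate _ _ L) => [||t /andP [Lt _]]; last 2 first.
- by rewrite /L; lia.
- rewrite /vandermonde_term; case: ifP => // tm.
  by rewrite out_A // mulr0 mul0r.
rewrite [RHS](@sum_nat_truncate _ _ L) => [||t /andP [Lt tm]]; last 2 first.
- by rewrite /L; lia.
- by rewrite out_A // mulr0 mul0r.
apply: eq_big_nat => t /andP [_ tL].
by rewrite /vandermonde_term ifT //; rewrite /L in tL; lia.
Qed.

Lemma closed_form_step (w : F) A b c x y :
  q ^+ (x * (b + x)) * w * qbin A x / qbin (b + x) b * step_weight b c x y =
  w * q ^+ (y * (c + y)) * vandermonde_term A (b + c) (c + y) x.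
Proof.
rewrite /step_weight /vandermonde_term.
case: (boolP (x <= c + y)%N) => le_x; last by rewrite andbF !mulr0.
case: (boolP (y <= b + x)%N) => le_y /=; last first.
  by rewrite mulr0 (@qbin_gt (b + c)) ?mulr0 //; lia.
rewrite (@qbin_sym (b + c) (c + y - x)); last by lia.
rewrite (_ : b + c - (c + y - x) = b + x - y)%N; last by lia.
have qbin_b_neq0 : qbin (b + x) b != 0 by apply: qbin_neq0; lia.
have exp_split : q ^+ (x * (b + x)) * q ^+ (y * (c + y - x)) =
                 q ^+ (y * (c + y)) * q ^+ (x * (b + x - y)).
  by rewrite -!exprD; congr (_ ^+ _); nia.
transitivity (q ^+ (x * (b + x)) * q ^+ (y * (c + y - x)) *
              (w * qbin A x * qbin (b + c) (b + x - y))); first by field.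
by rewrite exp_split; ring.
Qed.

Lemma qbin_revision A b c y :
  qbin (A + (b + c)) (c + y) * qbin (c + y) c = qbin (A + b + c) c * qbin (A + b) y.
Proof. by rewrite addnA qbin_trinomial ?addnK //; lia. Qed.

End QBinomial.

Section Multinomial.
Variable F : fieldType.
Variable q : F.
Hypothesis qint_neq0 : forall m : nat, (0 < m)%N -> qint q m != 0.
Variable n : nat -> nat.

Definition block_sum (j : nat) : nat := (\sum_(i < j) n i)%N.

Definition prefix_multinom (j : nat) : F := qmultinom q [seq n i | i <- iota 0 j.+1].

Lemma block_sumS j : block_sum j.+1 = (block_sum j + n j)%N.
Proof. by rewrite /block_sum big_ord_recr. Qed.

Lemma sumn_block_sum j : sumn [seq n i | i <- iota 0 j] = block_sum j.
Proof. by rewrite sumnE big_map /block_sum -(big_mkord xpredT) /index_iota subn0. Qed.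

Lemma prefix_multinom0 : prefix_multinom 0 = 1.
Proof.
by rewrite /prefix_multinom /qmultinom /= big_seq1 addn0 divff // qfact_neq0.
Qed.

Lemma prefix_multinomS j :
  prefix_multinom j.+1 = prefix_multinom j * qbin q (block_sum j.+2) (n j.+1).
Proof.
have prod_neq0 : \prod_(x <- [seq n i | i <- iota 0 j.+1]) qfact q x != 0.
  by rewrite prodf_seq_neq0; apply/allP => x _; exact: qfact_neq0.
have prod_last : \prod_(x <- [seq n i | i <- iota 0 j.+2]) qfact q x =
                 \prod_(x <- [seq n i | i <- iota 0 j.+1]) qfact q x * qfact q (n j.+1).
  by rewrite -addn1 iotaD map_cat big_cat big_seq1.
rewrite /prefix_multinom /qmultinom !sumn_block_sum prod_last.
rewrite /qbin [block_sum j.+2]block_sumS leq_addl addnK.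
field.
by rewrite prod_neq0 !qfact_neq0.
Qed.

Variable M : nat.

Definition block_walk (j y : nat) : F :=
  walk_weight M (fun i => step_weight q (n i) (n i.+1)) j y.

Lemma block_walk_closed j y : (block_sum j <= M)%N ->
  block_walk j y = q ^+ (y * (n j + y)) * prefix_multinom j * qbin q (block_sum j) y
                   / qbin q (n j + y) (n j).
Proof.
elim: j y => [|j IH] y le_M.
  rewrite /block_walk /= prefix_multinom0 /block_sum big_ord0; case: y => [|y].
    by rewrite mul0n expr0 !mul1r qbin_n0 // addn0 qbin_nn // divff ?oner_neq0.
  by rewrite qbin_gt // mulr0 mul0r.
rewrite block_sumS in le_M.
set A := block_sum j; set b := n j; set c := n j.+1.
have walk_j x := IH x (leq_trans (leq_addr _ _) le_M).
have -> : block_walk j.+1 y =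
          \sum_(x < M.+1) block_walk j x * step_weight q b c x y by [].
(* Each term of the recursion is a q-Vandermonde term ... *)
rewrite (eq_bigr (fun x : 'I_M.+1 =>
  prefix_multinom j * q ^+ (y * (c + y)) * vandermonde_term q A (b + c) (c + y) x));
  last by move=> x _; rewrite walk_j closed_form_step.
rewrite -mulr_sumr q_vandermonde_range //; last by lia.
(* ... and trinomial revision turns their sum into the closed form at j+1. *)
have qbin_cy_neq0 : qbin q (c + y) c != 0 by apply: qbin_neq0 => //; lia.
rewrite -[qbin q _ (c + y)](mulfK qbin_cy_neq0) qbin_revision //.
rewrite prefix_multinomS !block_sumS -/A -/b -/c.
by ring.
Qed.

End Multinomial.

(* Indices are 0-based: n_(i+1) in the paper is n i here, t_(i+1) is tent t i.
   The sum over t_1,...,t_k >= 0 is taken over all t with entries <= M, for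
   any M >= n_1+...+n_k (all other terms vanish). *)
Theorem lemma4p2 (F : fieldType) (q : F)
    (hq : forall m : nat, (0 < m)%N -> qint q m != 0)
    (k : nat) (hk : (1 <= k)%N) (n : nat -> nat)
    (M : nat) (hM : (\sum_(i < k) n i <= M)%N) :
  \sum_(t : k.-tuple 'I_M.+1 | (tent t 0 == 0%N) && (tent t k.-1 == 0%N))
     \prod_(0 <= i < k.-1)
        (q ^ ((tent t i.+1)%:Z * ((n i.+1)%:Z - (tent t i)%:Z + (tent t i.+1)%:Z))
         * qbinom q (n i + tent t i)%N%:Z (n i)%:Z
         * qbinom q (n i + n i.+1)%N%:Z ((n i + tent t i)%N%:Z - (tent t i.+1)%:Z))
  = qmultinom q [seq n i | i <- iota 0 k].
Proof.
case: k hk hM => // K _ le_M /=.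
under eq_bigr do under eq_bigr do rewrite summand_step_weight.
rewrite (walk_sum (fun i => step_weight q (n i) (n i.+1)) K (@ord0 M)).
rewrite -/(block_walk q n M K 0).
rewrite block_walk_closed //; last first.
  by apply: leq_trans le_M; rewrite -/(block_sum n K.+1) block_sumS leq_addr.
by rewrite mul0n expr0 mul1r qbin_n0 // addn0 qbin_nn // divr1 mulr1.
Qed.
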